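(* Let $\mathbf{r}(s)$ be a regular curve in $\mathbb R^3$ parametrized by arc length, with nowhere-vanishing torsion $\tau(s)$, contained in a circular cylinder of radius $\rho>0$. If the curvature is a non-zero constant $\kappa(s)=\kappa_0$, then one of the following holds: (1) $\mathbf{r}$ is a circular helix (i.e. $\tau$ is also constant); (2) the torsion $\tau$ is not constant and it satisfies the first-order differential equation $$\frac{\rho^4\tau'^2}{9-4\rho^2\tau^2}=\rho^2\kappa_0^2-\frac12+\frac{\rho^2\tau^2}{9}\mp\frac16\sqrt{9-4\rho^2\tau^2}$$ (for one choice of the sign $\mp$). In particular, in this case it is necessary that $|\tau|\le \frac{3}{2\rho}$.
   Context: Primes denote derivatives with respect to arc length $s$. A circular cylinder of radius $\rho$ is $\{\mathbf{x}:\|\mathbf{x}\|^2-\langle\mathbf{x},\mathbf{a}\rangle^2=\rho^2\}$ for a unit vector $\mathbf{a}$ (up to rigid motion). *)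

From Stdlib Require Import Reals.
From Coquelicot Require Import Coquelicot.
Open Scope R_scope.

Definition V3 := (R * R * R)%type.
Definition vx (v : V3) : R := fst (fst v).
Definition vy (v : V3) : R := snd (fst v).
Definition vz (v : V3) : R := snd v.
Definition mkV3 (x y z : R) : V3 := ((x, y), z).
Definition dot (u v : V3) : R := vx u * vx v + vy u * vy v + vz u * vz v.
Definition vnorm (v : V3) : R := sqrt (dot v v).
Definition vsub (u v : V3) : V3 := mkV3 (vx u - vx v) (vy u - vy v) (vz u - vz v).
Definition det3 (u v w : V3) : R :=
  vx u * (vy v * vz w - vz v * vy w)
  - vy u * (vx v * vz w - vz v * vx w)
  + vz u * (vx v * vy w - vy v * vx w).

Definition dn (r : R -> V3) (n : nat) (s : R) : V3 :=
  mkV3 (Derive_n (fun t => vx (r t)) n s)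
       (Derive_n (fun t => vy (r t)) n s)
       (Derive_n (fun t => vz (r t)) n s).

Definition in_interval (a b : Rbar) (s : R) : Prop :=
  Rbar_lt a (Finite s) /\ Rbar_lt (Finite s) b.

Definition smooth_on (I : R -> Prop) (r : R -> V3) : Prop :=
  forall s, I s -> forall n : nat,
    ex_derive_n (fun t => vx (r t)) n s /\
    ex_derive_n (fun t => vy (r t)) n s /\
    ex_derive_n (fun t => vz (r t)) n s.

(* Curvature and torsion of an arc-length parametrized curve:
   kappa = |r''|,  tau = det(r', r'', r''') / kappa^2 *)
Definition curvature (r : R -> V3) (s : R) : R := vnorm (dn r 2 s).
Definition torsion (r : R -> V3) (s : R) : R :=
  det3 (dn r 1 s) (dn r 2 s) (dn r 3 s) / (curvature r s) ^ 2.

(* r(I) lies on a circular cylinder of radius rho: for some point c on the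
   axis and unit axis direction u, |x - c|^2 - <x - c, u>^2 = rho^2. *)
Definition on_circular_cylinder (I : R -> Prop) (r : R -> V3) (rho : R) : Prop :=
  exists c u : V3, vnorm u = 1 /\
    forall s, I s ->
      dot (vsub (r s) c) (vsub (r s) c) - (dot (vsub (r s) c) u) ^ 2 = rho ^ 2.

From Stdlib Require Import Reals Lra Classical.
From Coquelicot Require Import Coquelicot.
Open Scope R_scope.

(* Write T = r', K = r'', A = <T,u>, D = det(T,K,u) for the unit axis u.
   Differentiating the cylinder equation twice gives rho^2 D^2 = (1 - A^2)^3;
   differentiating that, with D' = -tau <K,u>, gives
   <K,u> (rho^2 D tau - 3 (1 - A^2)^2 A) = 0, so that
   E = rho^2 tau^2 - 9 (1 - A^2) A^2 vanishes wherever <K,u> <> 0.  Where E <> 0,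
   <K,u> therefore vanishes near the point, and one more differentiation of
   <K,u>' = -kappa^2 A + tau D forces tau' = 0 there.  Hence (E^2)' = 0, so either
   E never vanishes and tau is constant, or E = 0 on the whole interval; then E' = 0
   is the stated equation, and rho^2 tau^2 = 9 A^2 (1 - A^2) <= 9/4. *)

(** * Vector algebra *)

Lemma dot_comm (v w : V3) : dot v w = dot w v.
Proof. unfold dot; ring. Qed.

Lemma dot_self_nonneg (v : V3) : 0 <= dot v v.
Proof. unfold dot; nra. Qed.

Lemma dot_self_of_vnorm (v : V3) (k : R) : vnorm v = k -> dot v v = k ^ 2.
Proof. unfold vnorm; intros <-; rewrite pow2_sqrt; [reflexivity | apply dot_self_nonneg]. Qed.

Lemma det3_swap23 (v w z : V3) : det3 v w z = - det3 v z w.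
Proof. unfold det3; ring. Qed.

Lemma det3_repeat12 (v z : V3) : det3 v v z = 0.
Proof. unfold det3; ring. Qed.

Lemma gram_dot (T K w v : V3) :
  (dot T T * dot K K - dot T K ^ 2) * dot w v =
  dot w T * dot v T * dot K K + dot w K * dot v K * dot T T
  - dot T K * (dot w T * dot v K + dot w K * dot v T)
  + det3 T K w * det3 T K v.
Proof.
destruct T as [[t1 t2] t3], K as [[k1 k2] k3], w as [[w1 w2] w3], v as [[v1 v2] v3].
unfold dot, det3, vx, vy, vz; simpl; ring.
Qed.

Lemma gram_det3 (T K w v : V3) :
  (dot T T * dot K K - dot T K ^ 2) * det3 T w v =
  (dot T T * dot w K - dot T K * dot w T) * det3 T K v
  + det3 T K w * (dot T K * dot T v - dot T T * dot K v).
Proof.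
destruct T as [[t1 t2] t3], K as [[k1 k2] k3], w as [[w1 w2] w3], v as [[v1 v2] v3].
unfold dot, det3, vx, vy, vz; simpl; ring.
Qed.

Section OrthogonalFrame.
Variables T K : V3.
Hypotheses (T_unit : dot T T = 1) (T_perp_K : dot T K = 0).

Lemma parseval_frame (u : V3) : dot u u = 1 ->
  dot K K * (1 - dot T u ^ 2) = dot K u ^ 2 + det3 T K u ^ 2.
Proof.
intros u_unit; pose proof (gram_dot T K u u) as G.
rewrite T_unit, T_perp_K, u_unit, (dot_comm u T), (dot_comm u K) in G.
nra.
Qed.

Lemma dot_frame_expansion (W u : V3) : dot T W = - dot K K -> dot K W = 0 ->
  dot K K * dot W u = - dot K K ^ 2 * dot T u + det3 T K W * det3 T K u.
Proof.
intros TW KW; pose proof (gram_dot T K W u) as G.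
rewrite T_unit, T_perp_K, (dot_comm W T), (dot_comm W K), TW, KW, (dot_comm u T) in G.
lra.
Qed.

Lemma det3_frame_expansion (W u : V3) : dot K W = 0 ->
  dot K K * det3 T W u = - det3 T K W * dot K u.
Proof.
intros KW; pose proof (gram_det3 T K W u) as G.
rewrite T_unit, T_perp_K, (dot_comm W K), KW in G.
lra.
Qed.

End OrthogonalFrame.

(* [x] is the position relative to a point of the axis; the last two hypotheses are
   the cylinder equation differentiated once and twice along a unit-speed curve. *)
Lemma cylinder_det3_identity (T K u x : V3) (rho : R) :
  dot T T = 1 -> dot T K = 0 -> dot u u = 1 ->
  dot x x - dot x u ^ 2 = rho ^ 2 ->
  dot x T = dot x u * dot T u ->
  dot x K = dot T u ^ 2 - 1 + dot x u * dot K u ->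
  rho ^ 2 * det3 T K u ^ 2 = (1 - dot T u ^ 2) ^ 3.
Proof.
intros T_unit T_perp_K u_unit x_cyl xT xK.
set (m := 1 - dot T u ^ 2).
set (X := det3 T u x).
assert (Exx : m * rho ^ 2 = X ^ 2).
{ pose proof (gram_dot T u x x) as G.
  rewrite T_unit, u_unit, (dot_comm x u), xT, (dot_comm u x) in G.
  unfold m, X; nra. }
assert (ExK : m ^ 2 = X * det3 T K u).
{ pose proof (gram_dot T u x K) as G.
  rewrite T_unit, u_unit, (dot_comm K T), T_perp_K, xT, xK, (dot_comm x u), (dot_comm K u) in G.
  rewrite (det3_swap23 T K u). unfold m, X. nra. }
pose proof (parseval_frame T K T_unit T_perp_K u u_unit) as K_split; fold m in K_split.
destruct (Req_dec m 0) as [m0 | m_neq0].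
- rewrite m0 in K_split |- *.
  assert (det3 T K u ^ 2 = 0) as D0 by nra.
  rewrite D0; ring.
- apply (Rmult_eq_reg_l m); [| exact m_neq0].
  transitivity ((m ^ 2) ^ 2); [| ring].
  rewrite ExK, Rpow_mult_distr, <- Exx. ring.
Qed.

(** * Scalar algebra *)

Lemma torsion_ode_algebra (rho kappa tau dtau A dA D : R) :
  rho <> 0 -> tau <> 0 ->
  rho ^ 2 * tau ^ 2 = 9 * (1 - A ^ 2) * A ^ 2 ->
  rho ^ 2 * tau * dtau = 9 * A * dA * (1 - 2 * A ^ 2) ->
  kappa ^ 2 * (1 - A ^ 2) = dA ^ 2 + D ^ 2 ->
  rho ^ 2 * D ^ 2 = (1 - A ^ 2) ^ 3 ->
  rho ^ 4 * dtau ^ 2 = (9 - 4 * rho ^ 2 * tau ^ 2) * (rho ^ 2 * kappa ^ 2 - (1 - A ^ 2) ^ 2).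
Proof.
intros rho_neq0 tau_neq0 E dE split cyl.
assert (q_neq0 : rho ^ 2 * tau ^ 2 <> 0).
{ apply Rmult_integral_contrapositive; split; apply pow_nonzero; assumption. }
apply (Rmult_eq_reg_r (rho ^ 2 * tau ^ 2)); [| exact q_neq0].
transitivity (rho ^ 2 * (rho ^ 2 * tau * dtau) ^ 2); [ring|].
replace (9 - 4 * rho ^ 2 * tau ^ 2) with (9 - 4 * (rho ^ 2 * tau ^ 2)) by ring.
rewrite dE, E.
transitivity (81 * A ^ 2 * (1 - 2 * A ^ 2) ^ 2
  * (rho ^ 2 * (kappa ^ 2 * (1 - A ^ 2)) - (1 - A ^ 2) ^ 3)); [| ring].
rewrite split.
replace (rho ^ 2 * (dA ^ 2 + D ^ 2)) with (rho ^ 2 * dA ^ 2 + rho ^ 2 * D ^ 2) by ring.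
rewrite cyl; ring.
Qed.

Lemma sqrt_discriminant_branch (c rho tau m : R) :
  rho ^ 2 * tau ^ 2 = 9 * m * (1 - m) ->
  exists eps : R, (eps = 1 \/ eps = -1) /\
    c - 1 / 2 + rho ^ 2 * tau ^ 2 / 9 - eps * (1 / 6) * sqrt (9 - 4 * rho ^ 2 * tau ^ 2)
    = c - m ^ 2.
Proof.
intros E.
assert (sqrt_eq : sqrt (9 - 4 * rho ^ 2 * tau ^ 2) = Rabs (3 * (2 * m - 1))).
{ rewrite <- sqrt_Rsqr_abs; f_equal; unfold Rsqr; nra. }
rewrite sqrt_eq, E.
destruct (Rle_dec 0 (3 * (2 * m - 1))) as [pos | neg].
- exists 1; split; [left; reflexivity|].
  rewrite Rabs_right by lra; field.
- exists (-1); split; [right; reflexivity|].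
  rewrite Rabs_left by lra; field.
Qed.

Lemma torsion_abs_bound (rho tau A : R) : 0 < rho ->
  rho ^ 2 * tau ^ 2 = 9 * (1 - A ^ 2) * A ^ 2 -> Rabs tau <= 3 / (2 * rho).
Proof.
intros rho_pos E.
assert (sq_bound : (rho * Rabs tau) ^ 2 <= (3 / 2) ^ 2).
{ rewrite Rpow_mult_distr, pow2_abs, E. pose proof (pow2_ge_0 (1 - 2 * A ^ 2)). nra. }
assert (bound : rho * Rabs tau <= 3 / 2).
{ pose proof (Rabs_pos tau). nra. }
apply (Rmult_le_reg_l rho); [exact rho_pos|].
replace (rho * (3 / (2 * rho))) with (3 / 2) by (field; apply Rgt_not_eq; exact rho_pos).
exact bound.
Qed.

(** * Derivatives *)

Lemma is_derive_eq_rhs (f : R -> R) (s l l' : R) : is_derive f s l -> l = l' -> is_derive f s l'.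
Proof. intros H ->; exact H. Qed.

(* Coquelicot's rules are stated over an abstract ring and do not unify with
   [Rplus], [Rminus] and [Rmult] syntactically; [derive_ring_expr] needs these. *)
Lemma is_derive_Rconst (k s : R) : is_derive (fun _ => k) s 0.
Proof. exact (is_derive_const k s). Qed.

Lemma is_derive_Rplus (f g : R -> R) (s df dg : R) :
  is_derive f s df -> is_derive g s dg -> is_derive (fun t => f t + g t) s (df + dg).
Proof. exact (is_derive_plus f g s df dg). Qed.

Lemma is_derive_Rminus (f g : R -> R) (s df dg : R) :
  is_derive f s df -> is_derive g s dg -> is_derive (fun t => f t - g t) s (df - dg).
Proof. exact (is_derive_minus f g s df dg). Qed.

Lemma is_derive_Rmult (f g : R -> R) (s df dg : R) :
  is_derive f s df -> is_derive g s dg ->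
  is_derive (fun t => f t * g t) s (df * g s + f s * dg).
Proof. intros Hf Hg; exact (is_derive_mult f g s df dg Hf Hg Rmult_comm). Qed.

Ltac derive_ring_expr :=
  lazymatch goal with
  | |- is_derive (fun _ => ?k) _ _ => apply is_derive_Rconst
  | |- is_derive (fun t => @?f t + @?g t) _ _ => apply (is_derive_Rplus f g); derive_ring_expr
  | |- is_derive (fun t => @?f t - @?g t) _ _ => apply (is_derive_Rminus f g); derive_ring_expr
  | |- is_derive (fun t => @?f t * @?g t) _ _ => apply (is_derive_Rmult f g); derive_ring_expr
  | |- is_derive (fun t => @?f t ^ ?n) _ _ => apply (is_derive_pow f n); derive_ring_expr
  | |- _ => eassumption
  end.

Ltac solve_derive := eapply is_derive_eq_rhs; [derive_ring_expr | cbn [INR Nat.pred]; ring].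

Lemma locally_in_interval (a b : Rbar) (s : R) :
  in_interval a b s -> locally s (in_interval a b).
Proof.
intros [Has Hsb]; apply (locally_interval _ s a b Has Hsb).
intros y Hay Hyb; split; assumption.
Qed.

Lemma is_derive_locally_const (g : R -> R) (k s l : R) :
  is_derive g s l -> locally s (fun t => g t = k) -> l = 0.
Proof.
intros Hg Hk.
pose proof (is_derive_unique _ _ _ (is_derive_ext_loc g (fun _ => k) s l Hk Hg)) as E.
rewrite Derive_const in E; symmetry; exact E.
Qed.

Lemma is_derive_const_on_interval (a b : Rbar) (g : R -> R) (k s l : R) :
  is_derive g s l -> (forall t, in_interval a b t -> g t = k) -> in_interval a b s -> l = 0.
Proof.
intros Hg Hk Hs; apply (is_derive_locally_const g k s l Hg).
apply (filter_imp (in_interval a b)); [exact Hk | apply locally_in_interval; exact Hs].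
Qed.

Lemma in_interval_between (a b : Rbar) (s1 s2 x : R) :
  in_interval a b s1 -> in_interval a b s2 -> Rmin s1 s2 <= x <= Rmax s1 s2 ->
  in_interval a b x.
Proof.
intros [a1 b1] [a2 b2] [lo hi].
assert (a_min : Rbar_lt a (Rmin s1 s2)) by (unfold Rmin; destruct (Rle_dec s1 s2); assumption).
assert (max_b : Rbar_lt (Rmax s1 s2) b) by (unfold Rmax; destruct (Rle_dec s1 s2); assumption).
split.
- destruct a as [a| |]; simpl in *; [lra | contradiction | exact I].
- destruct b as [b| |]; simpl in *; [lra | exact I | contradiction].
Qed.

Lemma eq_of_is_derive_0_on_interval (a b : Rbar) (g : R -> R) (s1 s2 : R) :
  (forall t, in_interval a b t -> is_derive g t 0) ->
  in_interval a b s1 -> in_interval a b s2 -> g s1 = g s2.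
Proof.
intros Hg H1 H2.
destruct (MVT_gen g s1 s2 (fun _ => 0)) as [c [_ E]].
- intros x Hx; apply Hg, (in_interval_between a b s1 s2); [exact H1 | exact H2 | lra].
- intros x Hx; apply continuity_pt_filterlim, (ex_derive_continuous g).
  exists 0; apply Hg, (in_interval_between a b s1 s2 x H1 H2 Hx).
- lra.
Qed.

Lemma locally_neq0_of_is_derive (g : R -> R) (s l : R) :
  is_derive g s l -> g s <> 0 -> locally s (fun t => g t <> 0).
Proof.
intros Hg Hs.
apply (ex_derive_continuous g s (ex_intro _ l Hg) (fun y => y <> 0)).
exact (open_neq 0 (g s) Hs).
Qed.

Definition is_derive3 (f : R -> V3) (s : R) (v : V3) : Prop :=
  is_derive (fun t => vx (f t)) s (vx v) /\
  is_derive (fun t => vy (f t)) s (vy v) /\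
  is_derive (fun t => vz (f t)) s (vz v).

Lemma is_derive3_const (w : V3) (s : R) : is_derive3 (fun _ => w) s (mkV3 0 0 0).
Proof. split; [|split]; apply is_derive_Rconst. Qed.

Lemma is_derive3_vsub (f : R -> V3) (c : V3) (s : R) (v : V3) :
  is_derive3 f s v -> is_derive3 (fun t => vsub (f t) c) s v.
Proof.
intros (Hx & Hy & Hz); unfold is_derive3, vsub; cbn [vx vy vz mkV3 fst snd].
split; [|split]; solve_derive.
Qed.

Lemma is_derive_dot (f g : R -> V3) (s : R) (f' g' : V3) :
  is_derive3 f s f' -> is_derive3 g s g' ->
  is_derive (fun t => dot (f t) (g t)) s (dot f' (g s) + dot (f s) g').
Proof. intros (Hf1 & Hf2 & Hf3) (Hg1 & Hg2 & Hg3); unfold dot; solve_derive. Qed.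

Lemma is_derive_det3 (f g h : R -> V3) (s : R) (f' g' h' : V3) :
  is_derive3 f s f' -> is_derive3 g s g' -> is_derive3 h s h' ->
  is_derive (fun t => det3 (f t) (g t) (h t)) s
    (det3 f' (g s) (h s) + det3 (f s) g' (h s) + det3 (f s) (g s) h').
Proof.
intros (Hf1 & Hf2 & Hf3) (Hg1 & Hg2 & Hg3) (Hh1 & Hh2 & Hh3); unfold det3; solve_derive.
Qed.

Lemma is_derive_dot_const (f : R -> V3) (w : V3) (s : R) (f' : V3) :
  is_derive3 f s f' -> is_derive (fun t => dot (f t) w) s (dot f' w).
Proof.
intros Hf; eapply is_derive_eq_rhs; [exact (is_derive_dot _ _ s _ _ Hf (is_derive3_const w s))|].
unfold dot, mkV3, vx, vy, vz; simpl; ring.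
Qed.

Lemma is_derive_det3_const (f g : R -> V3) (w : V3) (s : R) (f' g' : V3) :
  is_derive3 f s f' -> is_derive3 g s g' ->
  is_derive (fun t => det3 (f t) (g t) w) s (det3 f' (g s) w + det3 (f s) g' w).
Proof.
intros Hf Hg; eapply is_derive_eq_rhs;
  [exact (is_derive_det3 _ _ _ s _ _ _ Hf Hg (is_derive3_const w s))|].
unfold det3, mkV3, vx, vy, vz; simpl; ring.
Qed.

(** * Constant-curvature curves on a cylinder *)

(* For a unit-speed curve r'' = kappa N and r' x r'' = kappa B, so [axial_normal] and
   [axial_binormal] are kappa <N,u> and kappa <B,u>. *)
Definition axial_tangent (r : R -> V3) (u : V3) (s : R) : R := dot (dn r 1 s) u.
Definition axial_normal (r : R -> V3) (u : V3) (s : R) : R := dot (dn r 2 s) u.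
Definition axial_binormal (r : R -> V3) (u : V3) (s : R) : R := det3 (dn r 1 s) (dn r 2 s) u.

Definition torsion_defect (r : R -> V3) (u : V3) (rho s : R) : R :=
  rho ^ 2 * torsion r s ^ 2 - 9 * (1 - axial_tangent r u s ^ 2) * axial_tangent r u s ^ 2.

Section ConstantCurvatureOnCylinder.

Variables (a b : Rbar) (r : R -> V3).
Local Notation I := (in_interval a b).
Hypothesis r_smooth : smooth_on I r.

Lemma is_derive3_dn (n : nat) (s : R) : I s -> is_derive3 (dn r n) s (dn r (S n) s).
Proof.
intros Hs; destruct (r_smooth s Hs (S n)) as (Hx & Hy & Hz).
split; [|split]; apply Derive_correct; assumption.
Qed.

Lemma is_derive3_curve (s : R) : I s -> is_derive3 r s (dn r 1 s).
Proof. exact (is_derive3_dn 0 s). Qed.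

Hypothesis r_unit_speed : forall s, I s -> vnorm (dn r 1 s) = 1.

Lemma dot_dn1_dn1 (s : R) : I s -> dot (dn r 1 s) (dn r 1 s) = 1.
Proof. intros Hs; rewrite (dot_self_of_vnorm _ 1 (r_unit_speed s Hs)); ring. Qed.

Lemma dot_dn1_dn2 (s : R) : I s -> dot (dn r 1 s) (dn r 2 s) = 0.
Proof.
intros Hs.
pose proof (is_derive_dot _ _ s _ _ (is_derive3_dn 1 s Hs) (is_derive3_dn 1 s Hs)) as Hd.
pose proof (is_derive_const_on_interval a b _ _ s _ Hd dot_dn1_dn1 Hs) as E.
rewrite (dot_comm (dn r 2 s)) in E; lra.
Qed.

Variable kappa0 : R.
Hypothesis r_curvature : forall s, I s -> curvature r s = kappa0.
Hypothesis kappa0_neq0 : kappa0 <> 0.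

Lemma dot_dn2_dn2 (s : R) : I s -> dot (dn r 2 s) (dn r 2 s) = kappa0 ^ 2.
Proof. intros Hs; apply dot_self_of_vnorm, r_curvature, Hs. Qed.

Lemma dot_dn1_dn3 (s : R) : I s -> dot (dn r 1 s) (dn r 3 s) = - kappa0 ^ 2.
Proof.
intros Hs.
pose proof (is_derive_dot _ _ s _ _ (is_derive3_dn 1 s Hs) (is_derive3_dn 2 s Hs)) as Hd.
pose proof (is_derive_const_on_interval a b _ _ s _ Hd dot_dn1_dn2 Hs) as E.
rewrite (dot_dn2_dn2 s Hs) in E; lra.
Qed.

Lemma dot_dn2_dn3 (s : R) : I s -> dot (dn r 2 s) (dn r 3 s) = 0.
Proof.
intros Hs.
pose proof (is_derive_dot _ _ s _ _ (is_derive3_dn 2 s Hs) (is_derive3_dn 2 s Hs)) as Hd.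
pose proof (is_derive_const_on_interval a b _ _ s _ Hd dot_dn2_dn2 Hs) as E.
rewrite (dot_comm (dn r 3 s)) in E; lra.
Qed.

Lemma torsion_det3 (s : R) : I s ->
  torsion r s = det3 (dn r 1 s) (dn r 2 s) (dn r 3 s) / kappa0 ^ 2.
Proof. intros Hs; unfold torsion; rewrite (r_curvature s Hs); reflexivity. Qed.

Lemma ex_derive_torsion (s : R) : I s -> ex_derive (torsion r) s.
Proof.
intros Hs.
pose proof (is_derive_det3 _ _ _ s _ _ _
  (is_derive3_dn 1 s Hs) (is_derive3_dn 2 s Hs) (is_derive3_dn 3 s Hs)) as Hd.
eexists; apply (is_derive_ext_loc (fun t => det3 (dn r 1 t) (dn r 2 t) (dn r 3 t) * / kappa0 ^ 2)).
- apply (filter_imp I); [| apply locally_in_interval, Hs].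
  intros t Ht; rewrite (torsion_det3 t Ht); reflexivity.
- derive_ring_expr.
Qed.

Variable u : V3.

Lemma is_derive_axial_tangent (s : R) : I s -> is_derive (axial_tangent r u) s (axial_normal r u s).
Proof. intros Hs; exact (is_derive_dot_const _ u s _ (is_derive3_dn 1 s Hs)). Qed.


Lemma is_derive_axial_normal (s : R) : I s ->
  is_derive (axial_normal r u) s
    (- kappa0 ^ 2 * axial_tangent r u s + torsion r s * axial_binormal r u s).
Proof.
intros Hs; eapply is_derive_eq_rhs; [exact (is_derive_dot_const _ u s _ (is_derive3_dn 2 s Hs))|].
pose proof (dot_frame_expansion _ _ (dot_dn1_dn1 s Hs) (dot_dn1_dn2 s Hs) (dn r 3 s) u) as F.
rewrite (dot_dn2_dn2 s Hs), (dot_dn1_dn3 s Hs), (dot_dn2_dn3 s Hs) in F.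
unfold axial_tangent, axial_binormal; rewrite (torsion_det3 s Hs).
apply (Rmult_eq_reg_l (kappa0 ^ 2)); [| apply pow_nonzero, kappa0_neq0].
rewrite F; field; exact kappa0_neq0.
Qed.

Lemma is_derive_axial_binormal (s : R) : I s ->
  is_derive (axial_binormal r u) s (- torsion r s * axial_normal r u s).
Proof.
intros Hs; eapply is_derive_eq_rhs;
  [exact (is_derive_det3_const _ _ u s _ _ (is_derive3_dn 1 s Hs) (is_derive3_dn 2 s Hs))|].
pose proof (det3_frame_expansion _ _ (dot_dn1_dn1 s Hs) (dot_dn1_dn2 s Hs) (dn r 3 s) u
  (dot_dn2_dn3 s Hs)) as F.
rewrite (dot_dn2_dn2 s Hs) in F.
unfold axial_normal; rewrite det3_repeat12, Rplus_0_l, (torsion_det3 s Hs).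
apply (Rmult_eq_reg_l (kappa0 ^ 2)); [| apply pow_nonzero, kappa0_neq0].
rewrite F; field; exact kappa0_neq0.
Qed.


Hypothesis u_unit : dot u u = 1.

Lemma axial_parseval (s : R) : I s ->
  kappa0 ^ 2 * (1 - axial_tangent r u s ^ 2) = axial_normal r u s ^ 2 + axial_binormal r u s ^ 2.
Proof.
intros Hs; rewrite <- (dot_dn2_dn2 s Hs).
exact (parseval_frame _ _ (dot_dn1_dn1 s Hs) (dot_dn1_dn2 s Hs) u u_unit).
Qed.

Variables (c : V3) (rho : R).
Hypothesis r_on_cylinder : forall s, I s ->
  dot (vsub (r s) c) (vsub (r s) c) - dot (vsub (r s) c) u ^ 2 = rho ^ 2.

Lemma is_derive3_radial (s : R) : I s -> is_derive3 (fun t => vsub (r t) c) s (dn r 1 s).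
Proof. intros Hs; exact (is_derive3_vsub r c s _ (is_derive3_curve s Hs)). Qed.

Lemma cylinder_dot_dn1 (s : R) : I s ->
  dot (vsub (r s) c) (dn r 1 s) = dot (vsub (r s) c) u * axial_tangent r u s.
Proof.
intros Hs.
pose proof (is_derive3_radial s Hs) as Hx.
pose proof (is_derive_dot _ _ s _ _ Hx Hx) as Hxx.
pose proof (is_derive_dot_const _ u s _ Hx) as Hxu.
assert (Hd : is_derive
  (fun t => dot (vsub (r t) c) (vsub (r t) c) - dot (vsub (r t) c) u ^ 2) s
  (dot (dn r 1 s) (vsub (r s) c) + dot (vsub (r s) c) (dn r 1 s)
   - 2 * dot (vsub (r s) c) u * dot (dn r 1 s) u)) by solve_derive.
pose proof (is_derive_const_on_interval a b _ _ s _ Hd r_on_cylinder Hs) as E.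
rewrite (dot_comm (dn r 1 s)) in E; unfold axial_tangent; lra.
Qed.

Lemma cylinder_dot_dn2 (s : R) : I s ->
  dot (vsub (r s) c) (dn r 2 s)
  = axial_tangent r u s ^ 2 - 1 + dot (vsub (r s) c) u * axial_normal r u s.
Proof.
intros Hs.
pose proof (is_derive3_radial s Hs) as Hx.
pose proof (is_derive_dot _ _ s _ _ Hx (is_derive3_dn 1 s Hs)) as HxT.
pose proof (is_derive_dot_const _ u s _ Hx) as Hxu.
pose proof (is_derive_axial_tangent s Hs) as HA.
assert (Hd : is_derive
  (fun t => dot (vsub (r t) c) (dn r 1 t) - dot (vsub (r t) c) u * axial_tangent r u t) s
  (dot (dn r 1 s) (dn r 1 s) + dot (vsub (r s) c) (dn r 2 s)
   - (dot (dn r 1 s) u * axial_tangent r u s + dot (vsub (r s) c) u * axial_normal r u s)))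
  by solve_derive.
assert (E0 : forall t, I t ->
  dot (vsub (r t) c) (dn r 1 t) - dot (vsub (r t) c) u * axial_tangent r u t = 0).
{ intros t Ht; rewrite (cylinder_dot_dn1 t Ht); ring. }
pose proof (is_derive_const_on_interval a b _ _ s _ Hd E0 Hs) as E.
rewrite (dot_dn1_dn1 s Hs) in E; unfold axial_tangent in *; lra.
Qed.

Lemma cylinder_binormal (s : R) : I s ->
  rho ^ 2 * axial_binormal r u s ^ 2 = (1 - axial_tangent r u s ^ 2) ^ 3.
Proof.
intros Hs; apply (cylinder_det3_identity _ _ u (vsub (r s) c)).
- exact (dot_dn1_dn1 s Hs).
- exact (dot_dn1_dn2 s Hs).
- exact u_unit.
- exact (r_on_cylinder s Hs).
- exact (cylinder_dot_dn1 s Hs).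
- exact (cylinder_dot_dn2 s Hs).
Qed.

Lemma axial_normal_factor (s : R) : I s ->
  axial_normal r u s * (rho ^ 2 * axial_binormal r u s * torsion r s
    - 3 * (1 - axial_tangent r u s ^ 2) ^ 2 * axial_tangent r u s) = 0.
Proof.
intros Hs.
pose proof (is_derive_axial_tangent s Hs) as HA.
pose proof (is_derive_axial_binormal s Hs) as HD.
assert (Hd : is_derive
  (fun t => rho ^ 2 * axial_binormal r u t ^ 2 - (1 - axial_tangent r u t ^ 2) ^ 3) s
  (-2 * (axial_normal r u s * (rho ^ 2 * axial_binormal r u s * torsion r s
    - 3 * (1 - axial_tangent r u s ^ 2) ^ 2 * axial_tangent r u s)))) by solve_derive.
assert (E0 : forall t, I t ->
  rho ^ 2 * axial_binormal r u t ^ 2 - (1 - axial_tangent r u t ^ 2) ^ 3 = 0).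
{ intros t Ht; rewrite (cylinder_binormal t Ht); ring. }
pose proof (is_derive_const_on_interval a b _ _ s _ Hd E0 Hs); lra.
Qed.

Lemma torsion_defect_eq0_of_axial_normal_neq0 (s : R) : I s ->
  axial_normal r u s <> 0 -> torsion_defect r u rho s = 0.
Proof.
intros Hs HN.
pose proof (axial_normal_factor s Hs) as F.
apply Rmult_integral in F; destruct F as [F | F]; [contradiction|].
pose proof (cylinder_binormal s Hs) as C.
pose proof (axial_parseval s Hs) as P.
unfold torsion_defect.
set (A := axial_tangent r u s) in *; set (N := axial_normal r u s) in *;
set (D := axial_binormal r u s) in *; set (tau := torsion r s) in *.
set (m := 1 - A ^ 2) in *.
assert (m_pos : 0 < m).
{ assert (0 < N ^ 2) by (apply pow2_gt_0; exact HN).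
  pose proof (pow2_ge_0 kappa0); pose proof (pow2_ge_0 D); nra. }
assert (E : m ^ 3 * (rho ^ 2 * tau ^ 2 - 9 * m * A ^ 2) = 0).
{ transitivity ((rho ^ 2 * D * tau) ^ 2 - 9 * m ^ 4 * A ^ 2
    - (rho ^ 2 * D ^ 2 - m ^ 3) * rho ^ 2 * tau ^ 2);
    [ring|].
  replace (rho ^ 2 * D * tau) with (3 * m ^ 2 * A) by lra.
  rewrite C; ring. }
apply Rmult_integral in E; destruct E as [E | E]; [| exact E].
exfalso; apply (pow_nonzero m 3); [lra | exact E].
Qed.

Lemma is_derive_torsion_defect (s : R) : I s ->
  is_derive (torsion_defect r u rho) s
    (2 * (rho ^ 2 * torsion r s * Derive (torsion r) s
      - 9 * axial_tangent r u s * axial_normal r u s * (1 - 2 * axial_tangent r u s ^ 2))).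
Proof.
intros Hs.
pose proof (Derive_correct _ _ (ex_derive_torsion s Hs)) as Htau.
pose proof (is_derive_axial_tangent s Hs) as HA.
unfold torsion_defect; solve_derive.
Qed.

Lemma torsion_stationary_of_axial_normal_locally_0 (s : R) : I s ->
  locally s (fun t => axial_normal r u t = 0) -> Derive (torsion r) s = 0.
Proof.
intros Hs HN.
assert (HW : locally s (fun t =>
  - kappa0 ^ 2 * axial_tangent r u t + torsion r t * axial_binormal r u t = 0)).
{ apply (filter_imp (fun t => I t /\ locally t (fun t' => axial_normal r u t' = 0))).
  - intros t [Ht HNt]; exact (is_derive_locally_const _ 0 t _ (is_derive_axial_normal t Ht) HNt).
  - apply filter_and; [apply locally_in_interval, Hs | apply locally_locally, HN]. }
pose proof (Derive_correct _ _ (ex_derive_torsion s Hs)) as Htau.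
pose proof (is_derive_axial_tangent s Hs) as HA.
pose proof (is_derive_axial_binormal s Hs) as HD.
assert (Hd : is_derive
  (fun t => - kappa0 ^ 2 * axial_tangent r u t + torsion r t * axial_binormal r u t) s
  (- kappa0 ^ 2 * axial_normal r u s + Derive (torsion r) s * axial_binormal r u s
    - torsion r s ^ 2 * axial_normal r u s)) by solve_derive.
pose proof (is_derive_locally_const _ 0 s _ Hd HW) as E.
pose proof (locally_singleton _ _ HN) as N0; simpl in N0.
pose proof (locally_singleton _ _ HW) as W0; simpl in W0.
pose proof (axial_parseval s Hs) as P.
rewrite N0 in E, P.
assert (D_neq0 : axial_binormal r u s <> 0).
{ intros D0; rewrite D0 in W0, P.
  assert (A0 : axial_tangent r u s = 0).
  { apply (Rmult_eq_reg_l (- kappa0 ^ 2)); [lra|].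
    apply Ropp_neq_0_compat, pow_nonzero, kappa0_neq0. }
  apply (pow_nonzero kappa0 2 kappa0_neq0).
  rewrite A0 in P; lra. }
apply (Rmult_eq_reg_r (axial_binormal r u s)); [lra | exact D_neq0].
Qed.

Lemma axial_normal_locally_0_of_defect_neq0 (s : R) : I s ->
  torsion_defect r u rho s <> 0 -> locally s (fun t => axial_normal r u t = 0).
Proof.
intros Hs HE.
apply (filter_imp (fun t => I t /\ torsion_defect r u rho t <> 0)).
- intros t [Ht HEt].
  destruct (Req_dec (axial_normal r u t) 0) as [N0 | N_neq0]; [exact N0|].
  exfalso; exact (HEt (torsion_defect_eq0_of_axial_normal_neq0 t Ht N_neq0)).
- apply filter_and; [apply locally_in_interval, Hs|].
  exact (locally_neq0_of_is_derive _ s _ (is_derive_torsion_defect s Hs) HE).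
Qed.

Lemma is_derive_torsion_defect_sqr (s : R) : I s ->
  is_derive (fun t => torsion_defect r u rho t ^ 2) s 0.
Proof.
intros Hs; pose proof (is_derive_torsion_defect s Hs) as HE.
eapply is_derive_eq_rhs; [derive_ring_expr | cbn [INR Nat.pred]].
destruct (Req_dec (torsion_defect r u rho s) 0) as [E0 | E_neq0]; [rewrite E0; ring|].
pose proof (axial_normal_locally_0_of_defect_neq0 s Hs E_neq0) as HN.
rewrite (torsion_stationary_of_axial_normal_locally_0 s Hs HN), (locally_singleton _ _ HN).
ring.
Qed.

Lemma torsion_defect_eq0_of_nonconstant_torsion :
  ~ (exists t0 : R, forall s, I s -> torsion r s = t0) ->
  forall s, I s -> torsion_defect r u rho s = 0.
Proof.
intros Hnc s Hs.
destruct (Req_dec (torsion_defect r u rho s) 0) as [E0 | E_neq0]; [exact E0|].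
exfalso; apply Hnc; exists (torsion r s).
assert (E_nowhere0 : forall t, I t -> torsion_defect r u rho t <> 0).
{ intros t Ht Et; apply E_neq0.
  pose proof (eq_of_is_derive_0_on_interval a b _ t s is_derive_torsion_defect_sqr Ht Hs) as E.
  simpl in E; rewrite Et in E; nra. }
intros t Ht; apply (eq_of_is_derive_0_on_interval a b _ t s); [| exact Ht | exact Hs].
intros t' Ht'; pose proof (Derive_correct _ _ (ex_derive_torsion t' Ht')) as Htau.
rewrite (torsion_stationary_of_axial_normal_locally_0 t' Ht'
  (axial_normal_locally_0_of_defect_neq0 t' Ht' (E_nowhere0 t' Ht'))) in Htau.
exact Htau.
Qed.

Hypothesis rho_pos : 0 < rho.
Hypothesis torsion_neq0 : forall s, I s -> torsion r s <> 0.

Lemma torsion_ode_of_defect_vanishing :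
  (forall t, I t -> torsion_defect r u rho t = 0) ->
  forall s, I s -> 9 - 4 * rho ^ 2 * torsion r s ^ 2 <> 0 ->
  exists eps : R, (eps = 1 \/ eps = -1) /\
    rho ^ 4 * Derive (torsion r) s ^ 2 / (9 - 4 * rho ^ 2 * torsion r s ^ 2)
    = rho ^ 2 * kappa0 ^ 2 - 1 / 2 + rho ^ 2 * torsion r s ^ 2 / 9
      - eps * (1 / 6) * sqrt (9 - 4 * rho ^ 2 * torsion r s ^ 2).
Proof.
intros E0 s Hs Hdisc.
pose proof (is_derive_const_on_interval a b _ _ s _ (is_derive_torsion_defect s Hs) E0 Hs) as dE.
pose proof (E0 s Hs) as E; unfold torsion_defect in E.
assert (ode : rho ^ 4 * Derive (torsion r) s ^ 2
  = (9 - 4 * rho ^ 2 * torsion r s ^ 2)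
    * (rho ^ 2 * kappa0 ^ 2 - (1 - axial_tangent r u s ^ 2) ^ 2)).
{ apply (torsion_ode_algebra _ _ _ _ _ (axial_normal r u s) (axial_binormal r u s)).
  - apply Rgt_not_eq, rho_pos.
  - exact (torsion_neq0 s Hs).
  - lra.
  - lra.
  - exact (axial_parseval s Hs).
  - exact (cylinder_binormal s Hs). }
destruct (sqrt_discriminant_branch (rho ^ 2 * kappa0 ^ 2) rho (torsion r s)
  (1 - axial_tangent r u s ^ 2)) as [eps [eps_sign branch]].
{ replace (1 - (1 - axial_tangent r u s ^ 2)) with (axial_tangent r u s ^ 2) by ring; lra. }
exists eps; split; [exact eps_sign|].
rewrite branch, ode; field; exact Hdisc.
Qed.

End ConstantCurvatureOnCylinder.

Theorem theorem3p2 (a b : Rbar) (r : R -> V3) (rho kappa0 : R) :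
  Rbar_lt a b ->
  smooth_on (in_interval a b) r ->
  (forall s, in_interval a b s -> vnorm (dn r 1 s) = 1) ->
  (forall s, in_interval a b s -> torsion r s <> 0) ->
  0 < rho ->
  on_circular_cylinder (in_interval a b) r rho ->
  kappa0 <> 0 ->
  (forall s, in_interval a b s -> curvature r s = kappa0) ->
  (exists t0 : R, forall s, in_interval a b s -> torsion r s = t0)
  \/
  ((~ exists t0 : R, forall s, in_interval a b s -> torsion r s = t0) /\
   (forall s, in_interval a b s ->
      9 - 4 * rho ^ 2 * (torsion r s) ^ 2 <> 0 ->
      exists eps : R, (eps = 1 \/ eps = -1) /\
        rho ^ 4 * (Derive (torsion r) s) ^ 2 / (9 - 4 * rho ^ 2 * (torsion r s) ^ 2)
        = rho ^ 2 * kappa0 ^ 2 - 1 / 2 + rho ^ 2 * (torsion r s) ^ 2 / 9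
          - eps * (1 / 6) * sqrt (9 - 4 * rho ^ 2 * (torsion r s) ^ 2)) /\
   (forall s, in_interval a b s -> Rabs (torsion r s) <= 3 / (2 * rho))).
Proof.
intros _ r_smooth r_unit_speed torsion_neq0 rho_pos [c [u [u_norm r_on_cylinder]]]
  kappa0_neq0 r_curvature.
assert (u_unit : dot u u = 1) by (rewrite (dot_self_of_vnorm u 1 u_norm); ring).
destruct (classic (exists t0 : R, forall s, in_interval a b s -> torsion r s = t0))
  as [constant | nonconstant]; [left; exact constant | right].
pose proof (torsion_defect_eq0_of_nonconstant_torsion a b r r_smooth r_unit_speed kappa0
  r_curvature kappa0_neq0 u u_unit c rho r_on_cylinder nonconstant) as E0.
split; [exact nonconstant | split].
- exact (torsion_ode_of_defect_vanishing a b r r_smooth r_unit_speed kappa0 r_curvature u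
    u_unit c rho r_on_cylinder rho_pos torsion_neq0 E0).
- intros s Hs; apply (torsion_abs_bound _ _ (axial_tangent r u s) rho_pos).
  pose proof (E0 s Hs) as E; unfold torsion_defect in E; lra.
Qed.
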